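(* No rational prime $p\in\mathbb{Z}$ is a prime of $H_{1,2,2}$.
   Context: Let $\mathbf{i},\mathbf{j},\mathbf{k}$ be the standard quaternion units. $H_{1,2,2}$ is the subring of the quaternions equal to the $\mathbb{Z}$-module generated by $\mathbf{v}_1=1$, $\mathbf{v}_2=\mathbf{i}$, $\mathbf{v}_3=\tfrac12(1+\mathbf{i}+\sqrt2\,\mathbf{j})$, $\mathbf{v}_4=\tfrac12(1+\mathbf{i}+\sqrt2\,\mathbf{k})$. A unit is an element invertible in $H_{1,2,2}$. A prime of $H_{1,2,2}$ is a nonzero nonunit $\boldsymbol\pi$ such that whenever $\boldsymbol\pi=\mathbf{a}\mathbf{b}$ with $\mathbf{a},\mathbf{b}\in H_{1,2,2}$, at least one of $\mathbf{a},\mathbf{b}$ is a unit. *)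

From Stdlib Require Import Reals ZArith Znumtheory.
Open Scope R_scope.

Record quat : Type := Quat { qre : R; qi : R; qj : R; qk : R }.

Definition qmul (x y : quat) : quat :=
  Quat (qre x * qre y - qi x * qi y - qj x * qj y - qk x * qk y)
       (qre x * qi y + qi x * qre y + qj x * qk y - qk x * qj y)
       (qre x * qj y - qi x * qk y + qj x * qre y + qk x * qi y)
       (qre x * qk y + qi x * qj y - qj x * qi y + qk x * qre y).

Definition qadd (x y : quat) : quat :=
  Quat (qre x + qre y) (qi x + qi y) (qj x + qj y) (qk x + qk y).

Definition qscale (r : R) (x : quat) : quat :=
  Quat (r * qre x) (r * qi x) (r * qj x) (r * qk x).

Definition q0 : quat := Quat 0 0 0 0.
Definition q1 : quat := Quat 1 0 0 0.
Definition qI : quat := Quat 0 1 0 0.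
Definition qJ : quat := Quat 0 0 1 0.
Definition qK : quat := Quat 0 0 0 1.

Definition v1 : quat := q1.
Definition v2 : quat := qI.
Definition v3 : quat := qscale (/2) (qadd (qadd q1 qI) (qscale (sqrt 2) qJ)).
Definition v4 : quat := qscale (/2) (qadd (qadd q1 qI) (qscale (sqrt 2) qK)).

(* Membership in H_{1,2,2}: the Z-module generated by v1, v2, v3, v4. *)
Definition inH (q : quat) : Prop :=
  exists n1 n2 n3 n4 : Z,
    q = qadd (qadd (qscale (IZR n1) v1) (qscale (IZR n2) v2))
             (qadd (qscale (IZR n3) v3) (qscale (IZR n4) v4)).

Definition unitH (u : quat) : Prop :=
  inH u /\ exists w, inH w /\ qmul u w = q1 /\ qmul w u = q1.

Definition primeH (p : quat) : Prop :=
  inH p /\ p <> q0 /\ ~ unitH p /\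
  forall a b, inH a -> inH b -> p = qmul a b -> unitH a \/ unitH b.

Definition qofZ (n : Z) : quat := Quat (IZR n) 0 0 0.

(* Every rational prime is a sum of four squares p = a^2 + b^2 + c^2 + d^2 (Lagrange, by Euler's
   descent).  The quaternion alpha = a + b i + ((c + d) / sqrt 2) j + ((c - d) / sqrt 2) k lies in
   H_{1,2,2} together with its conjugate, and p = alpha * conj alpha.  The reduced norm is
   multiplicative and takes nonnegative integer values on H_{1,2,2}, so units have norm 1, whereas
   both factors have norm p. *)

From Stdlib Require Import Reals ZArith Znumtheory List Lia Lra Classical FinFun.

Section FourSquares.
Local Open Scope Z_scope.

Definition sum4sq (n : Z) : Prop := exists a b c d, n = a*a + b*b + c*c + d*d.

Lemma euler_four_squares (x1 x2 x3 x4 y1 y2 y3 y4 : Z) :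
  (x1*x1 + x2*x2 + x3*x3 + x4*x4) * (y1*y1 + y2*y2 + y3*y3 + y4*y4) =
    (x1*y1 + x2*y2 + x3*y3 + x4*y4) ^ 2 + (x1*y2 - x2*y1 + x3*y4 - x4*y3) ^ 2
  + (x1*y3 - x2*y4 - x3*y1 + x4*y2) ^ 2 + (x1*y4 + x2*y3 - x3*y2 - x4*y1) ^ 2.
Proof. ring. Qed.

Lemma divide_small_eq0 (p d : Z) : (p | d) -> Z.abs d < p -> d = 0.
Proof.
  intros Hd Hlt. destruct (Z.eq_dec d 0) as [|Hnz]; [assumption|].
  pose proof (Zdivide_bounds p d Hd Hnz). lia.
Qed.

Lemma prime_odd_ex (p : Z) : prime p -> p <> 2 -> exists n, p = 2*n + 1.
Proof.
  intros Hp Hp2. exists (p / 2).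
  pose proof (Z.div_mod p 2 ltac:(lia)). pose proof (Z.mod_pos_bound p 2 ltac:(lia)).
  destruct (Z.eq_dec (p mod 2) 0); [|lia].
  assert (H2 : (2 | p)) by (exists (p / 2); lia).
  pose proof (prime_ge_2 p Hp). destruct (prime_divisors p Hp 2 H2); lia.
Qed.

Lemma half_residues_sq_inj (p x y : Z) : prime p ->
  0 <= 2*x < p -> 0 <= 2*y < p -> (p | x*x - y*y) -> x = y.
Proof.
  intros Hp Hx Hy Hd.
  replace (x*x - y*y) with ((x - y) * (x + y)) in Hd by ring.
  destruct (prime_mult p Hp _ _ Hd) as [H|H]; apply divide_small_eq0 in H; lia.
Qed.

Lemma residues_NoDup_length (p : Z) (l : list Z) :
  (forall a, In a l -> 0 <= a < p) -> NoDup l -> (length l <= Z.to_nat p)%nat.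
Proof.
  intros Hrange Hl.
  rewrite <- (length_seq (Z.to_nat p) 0), <- (length_map Z.of_nat).
  apply NoDup_incl_length; [assumption|].
  intros a Ha. specialize (Hrange a Ha).
  apply in_map_iff. exists (Z.to_nat a). rewrite in_seq. lia.
Qed.

(* Pigeonhole: the (p+1)/2 values x^2 and the (p+1)/2 values -1-y^2 (mod p) cannot all be distinct. *)
Lemma prime_divide_sum_two_sq_add1 (p : Z) : prime p -> p <> 2 ->
  exists x y, 0 <= 2*x < p /\ 0 <= 2*y < p /\ (p | x*x + y*y + 1).
Proof.
  intros Hp Hp2. destruct (prime_odd_ex p Hp Hp2) as [n Hn].
  pose proof (prime_ge_2 p Hp).
  set (half := map Z.of_nat (seq 0 (S (Z.to_nat n)))).
  assert (Hhalf : forall x, In x half -> 0 <= 2*x < p).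
  { intros x Hx. apply in_map_iff in Hx. destruct Hx as [k [<- Hk]]. rewrite in_seq in Hk. lia. }
  apply NNPP. intros Hno.
  set (L1 := map (fun x => (x*x) mod p) half).
  set (L2 := map (fun y => (-1 - y*y) mod p) half).
  assert (Hnodup_half : NoDup half).
  { apply Injective_map_NoDup; [intros a b; lia | apply seq_NoDup]. }
  assert (HND : NoDup (L1 ++ L2)).
  { apply NoDup_app.
    - apply Injective_map_NoDup_in; [|assumption].
      intros x y Hx Hy Heq. apply (half_residues_sq_inj p); auto.
      exact (proj1 (Z.cong_iff_ex _ _ _) Heq).
    - apply Injective_map_NoDup_in; [|assumption].
      intros x y Hx Hy Heq. symmetry. apply (half_residues_sq_inj p); auto.
      destruct (proj1 (Z.cong_iff_ex _ _ _) Heq) as [k Hk]. exists k. lia.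
    - intros a Ha Hb. apply in_map_iff in Ha, Hb.
      destruct Ha as [x [Hx Hxi]], Hb as [y [Hy Hyi]].
      apply Hno. exists x, y. split; [|split]; auto.
      rewrite <- Hy in Hx. destruct (proj1 (Z.cong_iff_ex _ _ _) Hx) as [k Hk]. exists k. lia. }
  apply residues_NoDup_length with (p := p) in HND.
  - rewrite length_app in HND. unfold L1, L2, half in HND.
    rewrite !length_map, length_seq in HND. lia.
  - intros a Ha. apply in_app_or in Ha.
    destruct Ha as [Ha|Ha]; apply in_map_iff in Ha; destruct Ha as [x [<- _]];
      apply Z.mod_pos_bound; lia.
Qed.

Lemma centered_residue (m x : Z) : 0 < m -> exists y t, x = y + m*t /\ -m < 2*y <= m.
Proof.
  intros Hm. set (t := (2*x + m - 1) / (2*m)). exists (x - m*t), t.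
  pose proof (Z.div_mod (2*x + m - 1) (2*m) ltac:(lia)).
  pose proof (Z.mod_pos_bound (2*x + m - 1) (2*m) ltac:(lia)).
  split; [ring | lia].
Qed.

Lemma centered_sq_le (m y : Z) : -m < 2*y <= m -> (2*y)*(2*y) <= m*m.
Proof. intros. nia. Qed.

Lemma centered_sq_eq (m y : Z) : -m < 2*y <= m -> (2*y)*(2*y) = m*m -> 2*y = m.
Proof. intros. nia. Qed.

(* Writing x_i = y_i + m t_i, the four terms of Euler's identity for (sum x_i^2)(sum y_i^2) are m w_i. *)
Lemma sum4sq_descent (m p r y1 y2 y3 y4 t1 t2 t3 t4 : Z) : m <> 0 ->
  (y1 + m*t1)*(y1 + m*t1) + (y2 + m*t2)*(y2 + m*t2)
  + (y3 + m*t3)*(y3 + m*t3) + (y4 + m*t4)*(y4 + m*t4) = m*p ->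
  y1*y1 + y2*y2 + y3*y3 + y4*y4 = m*r -> sum4sq (r*p).
Proof.
  intros Hm Hx Hy.
  set (w1 := r + y1*t1 + y2*t2 + y3*t3 + y4*t4).
  set (w2 := t1*y2 - t2*y1 + t3*y4 - t4*y3).
  set (w3 := t1*y3 - t2*y4 - t3*y1 + t4*y2).
  set (w4 := t1*y4 + t2*y3 - t3*y2 - t4*y1).
  exists w1, w2, w3, w4.
  apply Z.mul_reg_l with (m*m); [nia|].
  transitivity ((m*p) * (m*r)); [ring|].
  rewrite <- Hx, <- Hy at 1.
  rewrite euler_four_squares.
  replace (_ * y1 + _ * y2 + _ * y3 + _ * y4) with (m*w1) by (unfold w1; lia).
  unfold w2, w3, w4. ring.
Qed.

Lemma prime_not_divide (p m : Z) : prime p -> 1 < m < p -> ~ (m | p).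
Proof. intros Hp Hm Hd. destruct (prime_divisors p Hp m Hd) as [|[|[|]]]; lia. Qed.

Lemma sum4sq_descent_step (p m : Z) : prime p -> 1 < m < p -> sum4sq (m*p) ->
  exists r, 0 < r < m /\ sum4sq (r*p).
Proof.
  intros Hp Hm [x1 [x2 [x3 [x4 Hx]]]].
  destruct (centered_residue m x1) as [y1 [t1 [-> B1]]]; [lia|].
  destruct (centered_residue m x2) as [y2 [t2 [-> B2]]]; [lia|].
  destruct (centered_residue m x3) as [y3 [t3 [-> B3]]]; [lia|].
  destruct (centered_residue m x4) as [y4 [t4 [-> B4]]]; [lia|].
  set (r := p - 2*(y1*t1 + y2*t2 + y3*t3 + y4*t4) - m*(t1*t1 + t2*t2 + t3*t3 + t4*t4)).
  assert (Hy : y1*y1 + y2*y2 + y3*y3 + y4*y4 = m*r) by (unfold r; lia).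
  pose proof (centered_sq_le m y1 B1). pose proof (centered_sq_le m y2 B2).
  pose proof (centered_sq_le m y3 B3). pose proof (centered_sq_le m y4 B4).
  assert (Hr : 0 <= r <= m).
  { assert (0 <= m*r) by (rewrite <- Hy; nia).
    assert (m*r <= m*m) by lia.
    split; nia. }
  pose proof (prime_not_divide p m Hp Hm) as Hndvd.
  exists r. split; [split|].
  - destruct (Z.eq_dec r 0) as [Hr0|]; [|lia]. exfalso.
    rewrite Hr0, Z.mul_0_r in Hy.
    assert (y1 = 0 /\ y2 = 0 /\ y3 = 0 /\ y4 = 0) as (-> & -> & -> & ->) by nia.
    apply Hndvd. exists (t1*t1 + t2*t2 + t3*t3 + t4*t4). unfold r in Hr0. lia.
  - destruct (Z.eq_dec r m) as [Hrm|]; [|lia]. exfalso.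
    rewrite Hrm in Hy.
    assert (2*y1 = m /\ 2*y2 = m /\ 2*y3 = m /\ 2*y4 = m) as (E1 & E2 & E3 & E4)
      by (repeat split; apply centered_sq_eq; auto; lia).
    apply Hndvd. exists (1 + t1 + t2 + t3 + t4 + t1*t1 + t2*t2 + t3*t3 + t4*t4).
    unfold r in Hrm. lia.
  - apply (sum4sq_descent m p r y1 y2 y3 y4 t1 t2 t3 t4); [lia | lia | exact Hy].
Qed.

Lemma sum4sq_prime_of_multiple (p m : Z) : prime p -> 0 < m < p -> sum4sq (m*p) -> sum4sq p.
Proof.
  intros Hp. induction m as [m IH] using (well_founded_ind (Z.lt_wf 0)).
  intros Hm Hmp. destruct (Z.eq_dec m 1) as [->|Hm1].
  - now rewrite Z.mul_1_l in Hmp.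
  - destruct (sum4sq_descent_step p m Hp ltac:(lia) Hmp) as [r [Hr Hrp]].
    apply (IH r); [lia | lia | exact Hrp].
Qed.

Lemma sum4sq_prime (p : Z) : prime p -> sum4sq p.
Proof.
  intros Hp. pose proof (prime_ge_2 p Hp).
  destruct (Z.eq_dec p 2) as [->|Hp2]; [exists 1, 1, 0, 0; reflexivity|].
  destruct (prime_divide_sum_two_sq_add1 p Hp Hp2) as [x [y [Hx [Hy [m Hm]]]]].
  apply (sum4sq_prime_of_multiple p m Hp).
  - split; nia.
  - exists x, y, 1, 0. lia.
Qed.

End FourSquares.

Local Open Scope R_scope.

Definition hcomb (n1 n2 n3 n4 : Z) : quat :=
  qadd (qadd (qscale (IZR n1) v1) (qscale (IZR n2) v2))
       (qadd (qscale (IZR n3) v3) (qscale (IZR n4) v4)).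

Lemma inH_hcomb (n1 n2 n3 n4 : Z) : inH (hcomb n1 n2 n3 n4).
Proof. now exists n1, n2, n3, n4. Qed.

Lemma hcombE (n1 n2 n3 n4 : Z) :
  hcomb n1 n2 n3 n4 =
  Quat (IZR n1 + (IZR n3 + IZR n4) / 2) (IZR n2 + (IZR n3 + IZR n4) / 2)
       (IZR n3 * sqrt 2 / 2) (IZR n4 * sqrt 2 / 2).
Proof. unfold hcomb, v1, v2, v3, v4, q1, qI, qJ, qK, qadd, qscale; simpl; f_equal; field. Qed.

Definition qnorm (x : quat) : R :=
  qre x * qre x + qi x * qi x + qj x * qj x + qk x * qk x.

Definition qconj (x : quat) : quat := Quat (qre x) (- qi x) (- qj x) (- qk x).

Lemma qnorm_mul (x y : quat) : qnorm (qmul x y) = qnorm x * qnorm y.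
Proof. destruct x, y; unfold qnorm, qmul; simpl; ring. Qed.

Lemma qnorm_qconj (x : quat) : qnorm (qconj x) = qnorm x.
Proof. destruct x; unfold qnorm, qconj; simpl; ring. Qed.

Lemma qmul_qconj (x : quat) : qmul x (qconj x) = Quat (qnorm x) 0 0 0.
Proof. destruct x; unfold qnorm, qconj, qmul; simpl; f_equal; ring. Qed.

Lemma sqrt2_half_sq (x : R) : x * sqrt 2 / 2 * (x * sqrt 2 / 2) = x * x / 2.
Proof.
  transitivity (x * x * (sqrt 2 * sqrt 2) / 4); [field|].
  rewrite sqrt_sqrt by lra. field.
Qed.

Lemma qnorm_hcomb (n1 n2 n3 n4 : Z) :
  qnorm (hcomb n1 n2 n3 n4) =
  IZR (n1*n1 + n2*n2 + (n1 + n2)*(n3 + n4) + n3*n3 + n3*n4 + n4*n4).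
Proof.
  rewrite hcombE. unfold qnorm; simpl.
  rewrite !sqrt2_half_sq, !plus_IZR, !mult_IZR, !plus_IZR. field.
Qed.

Lemma qnorm_ge0 (x : quat) : 0 <= qnorm x.
Proof. unfold qnorm. nra. Qed.

Lemma inH_qnorm_IZR (q : quat) : inH q -> exists k : Z, (0 <= k)%Z /\ qnorm q = IZR k.
Proof.
  intros [n1 [n2 [n3 [n4 ->]]]]. fold (hcomb n1 n2 n3 n4).
  rewrite qnorm_hcomb. eexists; split; [|reflexivity].
  apply le_IZR. rewrite <- qnorm_hcomb. apply qnorm_ge0.
Qed.

Lemma unitH_qnorm (u : quat) : unitH u -> qnorm u = 1.
Proof.
  intros [Hu [w [Hw [Huw _]]]].
  destruct (inH_qnorm_IZR u Hu) as [k [Hk Nu]], (inH_qnorm_IZR w Hw) as [l [Hl Nw]].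
  assert (Hkl : (k * l = 1)%Z).
  { apply eq_IZR. rewrite mult_IZR, <- Nu, <- Nw, <- qnorm_mul, Huw.
    unfold qnorm, q1; simpl; ring. }
  rewrite Nu. destruct (Z.eq_mul_1_nonneg k l Hk Hkl) as [-> _]. reflexivity.
Qed.

Lemma qconj_hcomb (n1 n2 n3 n4 : Z) :
  qconj (hcomb n1 n2 n3 n4) = hcomb (n1 + n3 + n4) (- n2) (- n3) (- n4).
Proof. rewrite !hcombE. unfold qconj; simpl. rewrite !plus_IZR, !opp_IZR. f_equal; field. Qed.

Lemma inH_qconj (q : quat) : inH q -> inH (qconj q).
Proof.
  intros [n1 [n2 [n3 [n4 ->]]]]. fold (hcomb n1 n2 n3 n4).
  rewrite qconj_hcomb. apply inH_hcomb.
Qed.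

(* The element a + b i + ((c + d) / sqrt 2) j + ((c - d) / sqrt 2) k. *)
Lemma qnorm_hcomb_sum4sq (a b c d : Z) :
  qnorm (hcomb (a - c) (b - c) (c + d) (c - d)) = IZR (a*a + b*b + c*c + d*d).
Proof. rewrite qnorm_hcomb. f_equal. ring. Qed.

Lemma not_primeH_qnorm (q : quat) (p : Z) :
  inH q -> qnorm q = IZR p -> (1 < p)%Z -> ~ primeH (qofZ p).
Proof.
  intros Hq Nq Hp [_ [_ [_ Hirr]]].
  assert (Hfact : qofZ p = qmul q (qconj q)) by (rewrite qmul_qconj, Nq; reflexivity).
  assert (Hnonunit : forall x, qnorm x = IZR p -> ~ unitH x).
  { intros x Nx Hx. rewrite (unitH_qnorm x Hx) in Nx. apply eq_IZR in Nx. lia. }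
  destruct (Hirr q (qconj q) Hq (inH_qconj q Hq) Hfact) as [U|U]; revert U; apply Hnonunit.
  - exact Nq.
  - now rewrite qnorm_qconj.
Qed.

Theorem theorem36 : forall p : Z, prime p -> ~ primeH (qofZ p).
Proof.
  intros p Hp.
  destruct (sum4sq_prime p Hp) as [a [b [c [d Hsum]]]].
  apply (not_primeH_qnorm (hcomb (a - c) (b - c) (c + d) (c - d))).
  - apply inH_hcomb.
  - rewrite qnorm_hcomb_sum4sq, Hsum. reflexivity.
  - pose proof (prime_ge_2 p Hp). lia.
Qed.
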